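(* Let $N,K\ge1$, $\mathbf{g},\mathbf{h}_{r,k}\in\mathbb{C}^N$, $h_{d,k}\in\mathbb{C}$, $\sigma^2,\sigma_r^2,P_r,T_{\max}>0$, $E_k>0$ ($k=1,\dots,K$). Put $\mathbf{q}_k=\mathrm{diag}(\mathbf{g}^H)\mathbf{h}_{r,k}$, $\mathbf{G}=\mathrm{diag}(|[\mathbf{g}]_1|^2,\dots,|[\mathbf{g}]_N|^2)$, $\mathbf{H}_{r,k}=\mathrm{diag}(|[\mathbf{h}_{r,k}]_1|^2,\dots,|[\mathbf{h}_{r,k}]_N|^2)$, and $\gamma_k(\mathbf{v})=|h_{d,k}+\mathbf{v}^H\mathbf{q}_k|^2/(\sigma^2+\sigma_r^2\mathbf{v}^H\mathbf{G}\mathbf{v})$ for $\mathbf{v}\in\mathbb{C}^N$. Let $R^*_{\rm TDMA}$ be the optimal value of: maximize $\sum_k\tau_k\log_2(1+p_k\gamma_k(\mathbf{v}_k))$ over $\tau_k,p_k\in\mathbb{R}$, $\mathbf{v}_k\in\mathbb{C}^N$ ($k=1,\dots,K$), subject to $\tau_kp_k\le E_k$, $\sum_k\tau_k\le T_{\max}$, $\tau_k\ge0$, $p_k\ge0$, $p_k\mathbf{v}_k^H\mathbf{H}_{r,k}\mathbf{v}_k+\sigma_r^2\|\mathbf{v}_k\|^2\le P_r$ for all $k$. Let $R^*_{\rm NOMA}$ be the optimal value of: maximize $\tau\log_2(1+\sum_kp_k\gamma_k(\mathbf{v}))$ over $\tau,p_k\in\mathbb{R}$, $\mathbf{v}\in\mathbb{C}^N$,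 subject to $\tau p_k\le E_k$, $\tau\le T_{\max}$, $\tau\ge0$, $p_k\ge0$, $\sum_kp_k\mathbf{v}^H\mathbf{H}_{r,k}\mathbf{v}+\sigma_r^2\|\mathbf{v}\|^2\le P_r$. Let $(\{\breve p_k\},\breve{\mathbf{v}})$ be the optimal solution of the problem: maximize $\sum_k\tau_k\log_2(1+p_k\gamma_k(\mathbf{v}))$ over $\tau_k,p_k\in\mathbb{R}$ and a single $\mathbf{v}\in\mathbb{C}^N$ subject only to $\tau_kp_k\le E_k$, $\sum_k\tau_k\le T_{\max}$, $\tau_k\ge0$, $p_k\ge0$. If $\breve p_k\breve{\mathbf{v}}^H\mathbf{H}_{r,k}\breve{\mathbf{v}}+\sigma_r^2\|\breve{\mathbf{v}}\|^2\le P_r$ for all $k$, then $R^*_{\rm TDMA}\ge R^*_{\rm NOMA}$.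
   Context: $R^*_{\rm TDMA}$ is the optimal sum throughput of active-IRS-aided TDMA uplink with a dedicated IRS reflection/amplification vector $\mathbf{v}_k$ per device slot; $R^*_{\rm NOMA}$ that of NOMA with one shared IRS vector; $E_k$ is device $k$'s energy and $P_r$ the IRS amplification power budget. *)

From mathcomp Require Import all_boot all_order all_algebra.
From mathcomp Require Import all_classical all_reals all_analysis.
From mathcomp Require Export complex.
Set Implicit Arguments. Unset Strict Implicit. Unset Printing Implicit Defensive.
Import Order.TTheory GRing.Theory Num.Theory.
Local Open Scope ring_scope.
Local Open Scope classical_set_scope.

Section IRS.
Variables (R : realType) (N K : nat).

Definition sqn (z : R[i]) : R := (complex.Re z) ^+ 2 + (complex.Im z) ^+ 2.

Definition log2 (x : R) : R := ln x / ln 2.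

Definition dotH (v w : 'I_N -> R[i]) : R[i] := \sum_(i < N) (v i)^*%C * w i.

Definition qvec (g h : 'I_N -> R[i]) : 'I_N -> R[i] := fun i => (g i)^*%C * h i.

(* v^H diag(|a_1|^2,...,|a_N|^2) v *)
Definition quad_diag (a v : 'I_N -> R[i]) : R := \sum_(i < N) sqn (a i) * sqn (v i).

Definition sqnorm (v : 'I_N -> R[i]) : R := \sum_(i < N) sqn (v i).

Definition gam (g hr : 'I_N -> R[i]) (hd : R[i]) (s2 sr2 : R) (v : 'I_N -> R[i]) : R :=
  sqn (hd + dotH v (qvec g hr)) / (s2 + sr2 * quad_diag g v).

Variables (g : 'I_N -> R[i]) (hr : 'I_K -> 'I_N -> R[i]) (hd : 'I_K -> R[i])
          (s2 sr2 Pr Tmax : R) (E : 'I_K -> R).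

Definition gamma (k : 'I_K) (v : 'I_N -> R[i]) : R := gam g (hr k) (hd k) s2 sr2 v.

Definition tdma_obj (tau p : 'I_K -> R) (vs : 'I_K -> 'I_N -> R[i]) : R :=
  \sum_(k < K) tau k * log2 (1 + p k * gamma k (vs k)).

Definition tdma_feas (tau p : 'I_K -> R) (vs : 'I_K -> 'I_N -> R[i]) : Prop :=
  [/\ (forall k, tau k * p k <= E k),
      \sum_(k < K) tau k <= Tmax,
      (forall k, 0 <= tau k),
      (forall k, 0 <= p k) &
      (forall k, p k * quad_diag (hr k) (vs k) + sr2 * sqnorm (vs k) <= Pr)].

Definition R_TDMA : \bar R :=
  ereal_sup [set (tdma_obj x.1.1 x.1.2 x.2)%:E |
             x in [set x | tdma_feas x.1.1 x.1.2 x.2]].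

Definition noma_obj (tau : R) (p : 'I_K -> R) (v : 'I_N -> R[i]) : R :=
  tau * log2 (1 + \sum_(k < K) p k * gamma k v).

Definition noma_feas (tau : R) (p : 'I_K -> R) (v : 'I_N -> R[i]) : Prop :=
  [/\ (forall k, tau * p k <= E k),
      tau <= Tmax,
      0 <= tau,
      (forall k, 0 <= p k) &
      \sum_(k < K) p k * quad_diag (hr k) v + sr2 * sqnorm v <= Pr].

Definition R_NOMA : \bar R :=
  ereal_sup [set (noma_obj x.1.1 x.1.2 x.2)%:E |
             x in [set x | noma_feas x.1.1 x.1.2 x.2]].

Definition relax_obj (tau p : 'I_K -> R) (v : 'I_N -> R[i]) : R :=
  \sum_(k < K) tau k * log2 (1 + p k * gamma k v).

Definition relax_feas (tau p : 'I_K -> R) (v : 'I_N -> R[i]) : Prop :=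
  [/\ (forall k, tau k * p k <= E k),
      \sum_(k < K) tau k <= Tmax,
      (forall k, 0 <= tau k) &
      (forall k, 0 <= p k)].

Definition relax_optimal (tau p : 'I_K -> R) (v : 'I_N -> R[i]) : Prop :=
  relax_feas tau p v /\
  forall tau' p' v', relax_feas tau' p' v' -> relax_obj tau' p' v' <= relax_obj tau p v.

End IRS.

From mathcomp Require Import all_boot all_order all_algebra.
From mathcomp Require Import all_classical all_reals all_analysis.
From mathcomp Require Import complex.
From mathcomp Require Import ring.
Set Implicit Arguments. Unset Strict Implicit. Unset Printing Implicit Defensive.
Import Order.TTheory GRing.Theory Num.Theory.
Local Open Scope ring_scope.

(* The relaxed problem dominates NOMA by time sharing: a NOMA slot of length
   tau with received SNRs x_k = p_k gamma_k(v) and total S = sum_k x_k is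
   split into TDMA slots of lengths tau x_k / S in which device k transmits
   with power p_k S / x_k.  Energies are unchanged, every slot sees the SNR
   S, so the sum rate is again tau log2(1 + S), and v is shared by all slots.
   Under the hypothesis, the relaxed optimum is itself TDMA-feasible with
   v_k = v for every k, hence bounded by the TDMA optimum. *)

Section TimeSharing.
Variables (R : realFieldType) (K : nat) (x : 'I_K -> R).
Hypothesis x_ge0 : forall k, 0 <= x k.

Definition share_time (tau : R) (k : 'I_K) : R := tau * x k / \sum_(i < K) x i.

(* A device with [x k = 0] gets [share_time = 0] and, since [_ / 0 = 0],
   [share_power = 0]. *)
Definition share_power (p : 'I_K -> R) (k : 'I_K) : R :=
  p k * (\sum_(i < K) x i) / x k.

Lemma ler_sum_term k : x k <= \sum_(i < K) x i.
Proof. by rewrite (bigD1 k) //= lerDl sumr_ge0. Qed.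

Lemma share_time_ge0 tau k : 0 <= tau -> 0 <= share_time tau k.
Proof. by move=> tau_ge0; rewrite divr_ge0 ?mulr_ge0 ?sumr_ge0. Qed.

Lemma share_power_ge0 p k : 0 <= p k -> 0 <= share_power p k.
Proof. by move=> pk_ge0; rewrite divr_ge0 ?mulr_ge0 ?sumr_ge0. Qed.

Lemma sum_share_time tau : 0 <= tau -> \sum_(k < K) share_time tau k <= tau.
Proof.
move=> tau_ge0; rewrite /share_time -mulr_suml -mulr_sumr.
have [->|S_neq0] := eqVneq (\sum_(i < K) x i) 0; first by rewrite invr0 mulr0.
by rewrite mulfK.
Qed.

Lemma share_time_power_le tau p k (e : R) :
  tau * p k <= e -> 0 <= e -> share_time tau k * share_power p k <= e.
Proof.
move=> le_e e_ge0; have [xk0|xk_neq0] := eqVneq (x k) 0.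
  by rewrite /share_time xk0 mulr0 !mul0r.
have S_neq0 : \sum_(i < K) x i != 0.
  by rewrite gt_eqF // (lt_le_trans _ (ler_sum_term k)) // lt_def xk_neq0 x_ge0.
suff -> : share_time tau k * share_power p k = tau * p k by [].
by rewrite /share_time /share_power; field; rewrite xk_neq0 S_neq0.
Qed.

(* [f 0 = 0] covers the degenerate case where every [x k] vanishes. *)
Lemma time_sharing_rate (f : R -> R) (tau : R) (p y : 'I_K -> R) :
  f 0 = 0 -> (forall k, x k = p k * y k) ->
  tau * f (\sum_(i < K) x i)
  = \sum_(k < K) share_time tau k * f (share_power p k * y k).
Proof.
move=> f0 x_py; have [S0|S_neq0] := eqVneq (\sum_(i < K) x i) 0.
  by rewrite S0 f0 mulr0 big1 // => k _; rewrite /share_time S0 invr0 mulr0 mul0r.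
transitivity (\sum_(k < K) share_time tau k * f (\sum_(i < K) x i)).
  by rewrite -mulr_suml /share_time -mulr_suml -mulr_sumr mulfK.
apply: eq_bigr => k _; have [xk0|xk_neq0] := eqVneq (x k) 0.
  by rewrite /share_time xk0 mulr0 !mul0r.
congr (_ * f _); move: xk_neq0; rewrite /share_power x_py => pyk_neq0.
by field; move: pyk_neq0; rewrite mulf_eq0 negb_or andbC.
Qed.

End TimeSharing.

Lemma sqn_ge0 (R : realType) (z : R[i]) : 0 <= sqn z.
Proof. by rewrite addr_ge0 // sqr_ge0. Qed.

Lemma gam_ge0 (R : realType) (N : nat) (g h : 'I_N -> R[i]) (hd : R[i])
  (s2 sr2 : R) (v : 'I_N -> R[i]) :
  0 <= s2 -> 0 <= sr2 -> 0 <= gam g h hd s2 sr2 v.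
Proof.
move=> s2_ge0 sr2_ge0; rewrite divr_ge0 ?sqn_ge0 // addr_ge0 // mulr_ge0 //.
by rewrite sumr_ge0 // => i _; rewrite mulr_ge0 ?sqn_ge0.
Qed.

Section Optimality.
Context {R : realType} {N K : nat}.
Context {g : 'I_N -> R[i]} {hr : 'I_K -> 'I_N -> R[i]} {hd : 'I_K -> R[i]}.
Context {s2 sr2 Pr Tmax : R} {E : 'I_K -> R}.

Lemma relax_obj_le_tdma tau p v :
  relax_feas Tmax E tau p v ->
  (forall k, p k * quad_diag (hr k) v + sr2 * sqnorm v <= Pr) ->
  ((relax_obj g hr hd s2 sr2 tau p v)%:E <= R_TDMA g hr hd s2 sr2 Pr Tmax E)%E.
Proof.
move=> [energy_le tau_le tau_ge0 p_ge0] irs_power; apply: ereal_sup_ubound.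
by exists (tau, p, fun _ => v).
Qed.

Hypotheses (s2_ge0 : 0 <= s2) (sr2_ge0 : 0 <= sr2).

Lemma noma_obj_le_relax_opt tau_b p_b v_b tau p v :
  relax_optimal g hr hd s2 sr2 Tmax E tau_b p_b v_b ->
  noma_feas hr sr2 Pr Tmax E tau p v ->
  noma_obj g hr hd s2 sr2 tau p v <= relax_obj g hr hd s2 sr2 tau_b p_b v_b.
Proof.
move=> [_ opt_b] [energy_le tau_le tau_ge0 p_ge0 _].
pose x k := p k * gamma g hr hd s2 sr2 k v.
have x_ge0 k : 0 <= x k by rewrite mulr_ge0 ?gam_ge0.
have feas : relax_feas Tmax E (share_time x tau) (share_power x p) v.
  split=> [k||k|k].
  - by rewrite share_time_power_le // (le_trans (mulr_ge0 tau_ge0 (p_ge0 k))).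
  - exact: le_trans (sum_share_time x tau_ge0) tau_le.
  - exact: share_time_ge0.
  - exact: share_power_ge0.
apply: le_trans (opt_b _ _ _ feas).
have x_split k : x k = p k * gamma g hr hd s2 sr2 k v by [].
rewrite /noma_obj (time_sharing_rate (f := fun s => log2 (1 + s)) _ _ x_split) //.
by rewrite /log2 addr0 ln1 mul0r.
Qed.

End Optimality.

Theorem theorem1 (R : realType) (N K : nat) (HN : (0 < N)%N) (HK : (0 < K)%N)
  (g : 'I_N -> R[i]) (hr : 'I_K -> 'I_N -> R[i]) (hd : 'I_K -> R[i])
  (s2 sr2 Pr Tmax : R) (E : 'I_K -> R)
  (Hs2 : 0 < s2) (Hsr2 : 0 < sr2) (HPr : 0 < Pr) (HT : 0 < Tmax)
  (HE : forall k, 0 < E k)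
  (tau_b p_b : 'I_K -> R) (v_b : 'I_N -> R[i]) :
  relax_optimal g hr hd s2 sr2 Tmax E tau_b p_b v_b ->
  (forall k, p_b k * quad_diag (hr k) v_b + sr2 * sqnorm v_b <= Pr) ->
  (R_NOMA g hr hd s2 sr2 Pr Tmax E <= R_TDMA g hr hd s2 sr2 Pr Tmax E)%E.
Proof.
move=> opt_b irs_power.
apply: ge_ereal_sup => _ [[[tau p] v] /= noma_ok <-].
apply: le_trans (relax_obj_le_tdma opt_b.1 irs_power).
by rewrite lee_fin (noma_obj_le_relax_opt (ltW Hs2) (ltW Hsr2) opt_b noma_ok).
Qed.
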